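(* Let $M,N$ be weights of $\mathbb{R}^m,\mathbb{R}^n$, let $A\in\mathbb{R}^{m\times n}$ with $MA=AN$, and let $K\subseteq\mathbb{R}^n$ be a closed cone. Then $$(A\circ I\circ K)^{[*]}\cap\mathcal{R}(A\circ I)\subseteq (A^{[\dagger]})^{[*]}\circ I\circ K^{[*]}.$$ If moreover $A^{[\dagger]}\circ A\circ K\subseteq K$, then equality holds.
   Context: A weight is a real symmetric matrix $W$ with $W^2=I$. $\mathbb{R}^m$ and $\mathbb{R}^n$ carry weights $M\in\mathbb{R}^{m\times m}$ and $N\in\mathbb{R}^{n\times n}$, respectively. The indefinite inner product on the space with weight $W$ is $[x,y]=\langle x,Wy\rangle$. Indefinite matrix product: if $B$ has $p$ columns and $C$ has $p$ rows (or is a vector in $\mathbb{R}^p$), $p\in\{m,n\}$, and $W$ is the weight of $\mathbb{R}^p$, then $B\circ C:=BWC$. $I$ denotes an identity matrix of the appropriate size. Indefinite adjoint of $B\in\mathbb{R}^{p\times q}$: $B^{[*]}:=W_qB^TW_p$, where $W_p,W_q$ are the weights of $\mathbb{R}^p,\mathbb{R}^q$. Indefinite Moore–Penrose inverse: $A^{[\dagger]}$ is the unique $X\in\mathbb{R}^{n\times m}$ such that - $A\circ X\circ A=A$, - $X\circ A\circ X=X$, - $(A\circ X)^{[*]}=A\circ X$, - $(X\circ A)^{[*]}=X\circ A$. It equals $NA^\dagger M$. Range and null space: for a matrix $B$ with $q$ columns, $\mathcal{R}(B)=\{B\circ x:x\in\mathbb{R}^q\}$ and $\mathcal{N}(B)=\{x\in\mathbb{R}^q:B\circ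 x=0\}$. A cone is a nonempty set closed under addition and under multiplication by nonnegative scalars. For $S$ a subset of $\mathbb{R}^p$ with weight $W$, the dual is $S^{[*]}=\{x\in\mathbb{R}^p:[x,t]\ge0\ \forall t\in S\}$. For a matrix $B$ and a set $S$, $B\circ S=\{B\circ s:s\in S\}$. *)

(* Real scalars: an arbitrary real (ordered) field R;
   the paper's case is R = the real numbers. *)
From HB Require Import structures.
From mathcomp Require Import all_boot all_order all_algebra.
Set Implicit Arguments. Unset Strict Implicit. Unset Printing Implicit Defensive.
Import Order.TTheory GRing.Theory Num.Theory.
Local Open Scope ring_scope.

Definition vset (R : realFieldType) (p : nat) := 'cV[R]_p -> Prop.

Definition vsubset (R : realFieldType) (p : nat) (S T : vset R p) : Prop :=
  forall x, S x -> T x.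

Definition vinter (R : realFieldType) (p : nat) (S T : vset R p) : vset R p :=
  fun x => S x /\ T x.

Definition is_weight (R : realFieldType) (p : nat) (W : 'M[R]_p) : Prop :=
  W^T = W /\ W *m W = 1%:M.

Definition iip (R : realFieldType) (p : nat) (W : 'M[R]_p) (x y : 'cV[R]_p) : R :=
  (x^T *m (W *m y)) 0 0.

Definition icirc (R : realFieldType) (a p b : nat) (W : 'M[R]_p)
  (B : 'M[R]_(a, p)) (C : 'M[R]_(p, b)) : 'M[R]_(a, b) := B *m W *m C.

Definition iadj (R : realFieldType) (p q : nat) (Wp : 'M[R]_p) (Wq : 'M[R]_q)
  (B : 'M[R]_(p, q)) : 'M[R]_(q, p) := Wq *m B^T *m Wp.

Definition iimg (R : realFieldType) (a q : nat) (W : 'M[R]_q)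
  (B : 'M[R]_(a, q)) (S : vset R q) : vset R a :=
  fun x => exists s, S s /\ x = icirc W B s.

Definition irange (R : realFieldType) (a q : nat) (W : 'M[R]_q)
  (B : 'M[R]_(a, q)) : vset R a :=
  iimg W B (fun _ => True).

Definition idual (R : realFieldType) (p : nat) (W : 'M[R]_p) (S : vset R p) : vset R p :=
  fun x => forall t, S t -> 0 <= iip W x t.

Definition is_cone (R : realFieldType) (p : nat) (K : vset R p) : Prop :=
  (exists x, K x) /\
  (forall x y, K x -> K y -> K (x + y)) /\
  (forall (c : R) x, 0 <= c -> K x -> K (c *: x)).

Definition is_closed (R : realFieldType) (p : nat) (K : vset R p) : Prop :=
  forall x : 'cV[R]_p,
    (forall e : R, 0 < e -> exists y, K y /\ \sum_(i < p) (x i 0 - y i 0) ^+ 2 < e) ->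
    K x.

Definition is_iMP (R : realFieldType) (m n : nat) (M : 'M[R]_m) (N : 'M[R]_n)
  (A : 'M[R]_(m, n)) (X : 'M[R]_(n, m)) : Prop :=
  [/\ icirc M (icirc N A X) A = A,
      icirc N (icirc M X A) X = X,
      iadj M M (icirc N A X) = icirc N A X
    & iadj N N (icirc M X A) = icirc M X A].

(* Under the weights, Y := N X M is the ordinary Moore-Penrose inverse of A and
   (A^[+])^[*] o I = Y^T, while M A = A N makes A^[*] = A^T. If y = A x has
   A^T y in K^[*], then y = (A Y)^T y = Y^T (A^T y). Conversely Y^T = A Y Y^T
   puts Y^T s in the range of A, and [Y^T s, A u] = [s, N Y A N u] with
   N Y A N u = A^[+] o A o u, which lies in K under the extra hypothesis. *)

From HB Require Import structures.
From mathcomp Require Import all_boot all_order all_algebra.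
Set Implicit Arguments. Unset Strict Implicit. Unset Printing Implicit Defensive.
Import Order.TTheory GRing.Theory Num.Theory.
Local Open Scope ring_scope.

Section IndefiniteCalculus.
Variable R : realFieldType.

Definition is_pinv (m n : nat) (A : 'M[R]_(m, n)) (Y : 'M[R]_(n, m)) : Prop :=
  [/\ A *m Y *m A = A, Y *m A *m Y = Y, (A *m Y)^T = A *m Y & (Y *m A)^T = Y *m A].

Lemma mulmx_invK (a p : nat) (W : 'M[R]_p) (B : 'M[R]_(a, p)) :
  W *m W = 1%:M -> B *m W *m W = B.
Proof. by move=> WW; rewrite -mulmxA WW mulmx1. Qed.

Lemma iimg_icirc1 (a q : nat) (W : 'M[R]_q) (B : 'M[R]_(a, q)) (S : vset R q) x :
  W *m W = 1%:M -> iimg W (icirc W B 1%:M) S x <-> exists2 s, S s & x = B *m s.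
Proof.
move=> WW; rewrite /iimg /icirc mulmx1 (mulmx_invK _ WW).
by split=> [[s [Ss ->]] | [s Ss ->]]; exists s.
Qed.

Lemma iadj_trmx (p q : nat) (Wp : 'M[R]_p) (Wq : 'M[R]_q) (B : 'M[R]_(p, q)) :
  Wp^T = Wp -> Wq^T = Wq -> iadj Wp Wq B = (Wp *m B *m Wq)^T.
Proof. by move=> Wpt Wqt; rewrite /iadj !trmx_mul Wpt Wqt mulmxA. Qed.

Lemma iadj_intertwining (m n : nat) (M : 'M[R]_m) (N : 'M[R]_n) (A : 'M[R]_(m, n)) :
  is_weight M -> is_weight N -> M *m A = A *m N -> iadj M N A = A^T.
Proof.
by move=> [Mt _] [Nt NN] MA; rewrite iadj_trmx // MA mulmx_invK.
Qed.

Lemma iip_iadj (p q : nat) (Wp : 'M[R]_p) (Wq : 'M[R]_q) (B : 'M[R]_(p, q))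
    (y : 'cV[R]_p) (t : 'cV[R]_q) :
  Wp^T = Wp -> is_weight Wq -> iip Wq (iadj Wp Wq B *m y) t = iip Wp y (B *m t).
Proof.
move=> Wpt [Wqt WqWq]; rewrite /iip /iadj !trmx_mul trmxK Wpt Wqt.
by rewrite !mulmxA mulmx_invK.
Qed.

Lemma iip_mulmx_sym (p : nat) (W B : 'M[R]_p) (x t : 'cV[R]_p) :
  is_weight W -> B^T = B -> iip W (B *m x) t = iip W x (W *m B *m W *m t).
Proof.
move=> [Wt WW] Bt; rewrite /iip trmx_mul Bt !mulmxA.
by rewrite -[x^T *m W *m W]mulmxA WW mulmx1.
Qed.

Lemma is_iMP_pinv (m n : nat) (M : 'M[R]_m) (N : 'M[R]_n)
    (A : 'M[R]_(m, n)) (X : 'M[R]_(n, m)) :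
  is_weight M -> is_weight N -> is_iMP M N A X -> is_pinv A (N *m X *m M).
Proof.
move=> [Mt MM] [Nt NN] [AXA XAX AXt XAt].
rewrite /icirc !iadj_trmx // in AXA XAX AXt XAt; split.
- by rewrite !mulmxA AXA.
- by rewrite -[in RHS]XAX !mulmxA.
- by rewrite !mulmxA -[in RHS]AXt !trmx_mul Mt Nt !mulmxA mulmx_invK.
- by rewrite -!(mulmxA N) -[in RHS]XAt !trmx_mul Mt Nt !mulmxA NN mul1mx.
Qed.

Section PseudoInverse.
Variables (m n : nat) (A : 'M[R]_(m, n)) (Y : 'M[R]_(n, m)).
Hypothesis Ypinv : is_pinv A Y.

Lemma pinv_trmx_range : Y^T = A *m (Y *m Y^T).
Proof.
case: Ypinv => _ YAY AYt _.
by rewrite -{1}YAY !trmx_mul mulmxA -trmx_mul AYt -mulmxA.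
Qed.

Lemma pinv_trmxK : Y^T *m A^T *m A = A.
Proof. by case: Ypinv => AYA _ AYt _; rewrite -trmx_mul AYt. Qed.

Lemma pinv_trmxV : A^T *m Y^T = Y *m A.
Proof. by case: Ypinv => _ _ _ YAt; rewrite -trmx_mul YAt. Qed.

End PseudoInverse.

End IndefiniteCalculus.

Theorem lemma3p8 (R : realFieldType) (m n : nat)
  (M : 'M[R]_m) (N : 'M[R]_n) (A : 'M[R]_(m, n)) (X : 'M[R]_(n, m))
  (K : vset R n) :
  is_weight M -> is_weight N -> M *m A = A *m N ->
  is_iMP M N A X ->
  is_cone K -> is_closed K ->
  vsubset
    (vinter (idual M (iimg N (icirc N A 1%:M) K)) (irange N (icirc N A 1%:M)))
    (iimg N (icirc N (iadj N M X) 1%:M) (idual N K))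
  /\
  (vsubset (iimg N (icirc M X A) K) K ->
   vsubset
     (iimg N (icirc N (iadj N M X) 1%:M) (idual N K))
     (vinter (idual M (iimg N (icirc N A 1%:M) K)) (irange N (icirc N A 1%:M)))).
Proof.
move=> wM wN MA_AN iMP _ _; have [Mt MM] := wM; have [Nt NN] := wN.
have adjA : iadj M N A = A^T := iadj_intertwining wM wN MA_AN.
rewrite (iadj_trmx X Nt Mt).
have Ypinv := is_iMP_pinv wM wN iMP; set Y := N *m X *m M in Ypinv *.
split.
- move=> y [yD /(iimg_icirc1 _ _ _ NN) [x _ yE]]; subst y.
  apply/(iimg_icirc1 _ _ _ NN); exists (A^T *m (A *m x)); last first.
    by rewrite !mulmxA (pinv_trmxK Ypinv).
  move=> t Kt; rewrite -adjA iip_iadj //.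
  by apply: yD; apply/(iimg_icirc1 _ _ _ NN); exists t.
- move=> XAK y /(iimg_icirc1 _ _ _ NN) [s sD ->]; split.
  + move=> _ /(iimg_icirc1 _ _ _ NN) [u Ku ->].
    rewrite -(iip_iadj _ _ _ Mt wN) adjA mulmxA (pinv_trmxV Ypinv).
    have [_ _ _ YAt] := Ypinv.
    rewrite iip_mulmx_sym //; apply: sD; apply: XAK; exists u; split => //.
    by rewrite /icirc /Y !mulmxA NN mul1mx.
  + apply/(iimg_icirc1 _ _ _ NN); exists (Y *m Y^T *m s) => //.
    by rewrite {1}(pinv_trmx_range Ypinv) !mulmxA.
Qed.
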